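(* Let $\mathcal K$ be a compact subset of $\mathcal L_{\mathbb C}$. For $L\in\mathcal K$ let $\eta_L$ be the $2$-dimensional Hausdorff measure on the chain $L$ with respect to the restriction of the visual metric $d$. Then there is $C<\infty$ such that $\eta_L(B(x,r))\le Cr^2$ for all $L\in\mathcal K$, $x\in\mathbf S^3$ and $r>0$, where $B(x,r)$ is the visual ball.
   Context: On $\mathbb{C}^3$: $u\cdot v=\sum u_i\bar v_i$, $\|u\|=\sqrt{u\cdot u}$, $\langle u,v\rangle=u_0\bar v_0-u_1\bar v_1-u_2\bar v_2$, $q(u)=\langle u,u\rangle$. $\mathbf S^3=\{u\in\mathbb P^2_{\mathbb C}:q(u)=0\}$ with visual metric $d(u,v)=\sqrt{|\langle u,v\rangle|/(\|u\|\|v\|)}$. $\mathcal L_{\mathbb C}=\{w\in\mathbb P^2_{\mathbb C}:q(w)<0\}$, with metric $d_E(u,v)=\|u\wedge v\|/(\|u\|\|v\|)$, $\|u\wedge v\|^2=\|u\|^2\|v\|^2-|u\cdot v|^2$; $w\in\mathcal L_{\mathbb C}$ is identified with the chain $L_w=\{u\in\mathbf S^3:\langle u,w\rangle=0\}$. *)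

From HB Require Import structures.
From mathcomp Require Import all_boot all_order all_algebra.
From mathcomp Require Import all_classical all_reals all_analysis.
From mathcomp.real_closed Require Import complex.

Set Implicit Arguments.
Unset Strict Implicit.
Unset Printing Implicit Defensive.

Import Order.TTheory GRing.Theory Num.Theory.
Local Open Scope classical_set_scope.
Local Open Scope ring_scope.

Section Defs.
Variable R : realType.

Definition C3 := ((R[i] * R[i]) * R[i])%type.

Definition c0 (u : C3) : R[i] := u.1.1.
Definition c1 (u : C3) : R[i] := u.1.2.
Definition c2 (u : C3) : R[i] := u.2.

Definition zero3 : C3 := (0, 0, 0).

Definition cabs (z : R[i]) : R := Num.sqrt (complex.Re z ^+ 2 + complex.Im z ^+ 2).

Definition dot3 (u v : C3) : R[i] :=
  c0 u * conjc (c0 v) + c1 u * conjc (c1 v) + c2 u * conjc (c2 v).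

(* ||u|| = sqrt (u . u)  (u . u is real and nonnegative) *)
Definition norm3 (u : C3) : R := Num.sqrt (complex.Re (dot3 u u)).

Definition herm (u v : C3) : R[i] :=
  c0 u * conjc (c0 v) - c1 u * conjc (c1 v) - c2 u * conjc (c2 v).

(* q(u) = <u,u> (a real number) *)
Definition qf (u : C3) : R := complex.Re (herm u u).

(* Points of P^2_C are represented by nonzero vectors of C^3; all notions
   below are invariant under u |-> lambda u. *)

Definition S3 : set C3 := [set u | u <> zero3 /\ qf u = 0].

Definition LC : set C3 := [set w | w <> zero3 /\ qf w < 0].

Definition visual_d (u v : C3) : R :=
  Num.sqrt (cabs (herm u v) / (norm3 u * norm3 v)).

Definition visual_ball (x : C3) (r : R) : set C3 :=
  [set u | S3 u /\ visual_d x u < r].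

(* metric on L_C: d_E(u,v) = ||u /\ v|| / (||u|| ||v||),
   ||u /\ v||^2 = ||u||^2 ||v||^2 - |u . v|^2 *)
Definition wedge_norm (u v : C3) : R :=
  Num.sqrt (norm3 u ^+ 2 * norm3 v ^+ 2 - cabs (dot3 u v) ^+ 2).

Definition dE (u v : C3) : R := wedge_norm u v / (norm3 u * norm3 v).

Definition chain (w : C3) : set C3 := [set u | S3 u /\ herm u w = 0].

Definition dE_open (U : set C3) : Prop :=
  forall x, U x -> exists2 e : R, 0 < e & [set y | dE x y < e] `<=` U.

Definition dE_compact (K : set C3) : Prop :=
  forall (I : Type) (U : I -> set C3),
    (forall i, dE_open (U i)) -> K `<=` \bigcup_i U i ->
    exists2 J : set I, finite_set J & K `<=` \bigcup_(i in J) U i.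

End Defs.

Section Hausdorff.
Variables (R : realType) (T : Type) (dist : T -> T -> R).
Local Open Scope ereal_scope.

(* diameter of a set (diam of the empty set is 0) *)
Definition diam (E : set T) : \bar R :=
  ereal_sup ([set 0%E] `|` [set z | exists x y, E x /\ E y /\ z = (dist x y)%:E]).

Definition hausdorff_content (X : set T) (s : nat) (delta : R) (A : set T)
  : \bar R :=
  ereal_inf [set S | exists F : nat -> set T,
     [/\ (forall n, F n `<=` X), A `<=` \bigcup_n F n,
         (forall n, diam (F n) <= delta%:E) &
         S = \sum_(n <oo) (diam (F n)) ^+ s]].

(* s-dimensional Hausdorff measure H^s(A) = sup_{delta > 0} H^s_delta(A)
   (without normalization constant) *)
Definition hausdorff_measure (X : set T) (s : nat) (A : set T) : \bar R :=
  ereal_sup [set hausdorff_content X s delta A | delta in [set d : R | (0 < d)%R]].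

End Hausdorff.

Definition eta_chain (R : realType) (w : C3 R) (A : set (C3 R)) : \bar R :=
  hausdorff_measure (@visual_d R) (chain w) 2 (A `&` chain w).

From HB Require Import structures.
From mathcomp Require Import all_boot all_order all_algebra.
From mathcomp Require Import all_classical all_reals all_analysis.
From mathcomp.real_closed Require Import complex.
From mathcomp Require Import ring lra zify.

(* For w in L_C put n = |w1|^2 + |w2|^2 and k = sqrt (n - |w0|^2) > 0. Up to
   scalars the chain L_w is the image of the unit circle under
     z |-> (n, conj w0 w1 - k z conj w2, conj w0 w2 + k z conj w1),
   and the visual distance between the images of z and z' is
   sqrt (k^2 |z - z'| / 2n). So L_w is a circle carrying the square root of
   the chordal metric, and a subset parametrized by an arc of length l has
   H^2-measure O(l k^2 / n): cut the arc into N pieces, each of squared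
   diameter O((l / N) k^2 / n).
   For x in S^3, d(x, image of z) < r reads |a - conj z k b| < 2 r^2 |x0| n for
   some a, b depending only on w and x. If k^2 <= 64 r^2 n, the whole chain
   already has measure O(r^2). Otherwise a single such z forces
   |b| >= k |x0| / 12, and any two such parameters are within
   4 r^2 |x0| n / (k |b|) = O(r^2 n / k^2) of each other, so the ball meets
   the chain in an arc of measure O(r^2). The constant does not depend on w. *)

Set Implicit Arguments.
Unset Strict Implicit.
Unset Printing Implicit Defensive.

Import Order.TTheory GRing.Theory Num.Theory.
Local Open Scope classical_set_scope.
Local Open Scope ring_scope.

Section HausdorffBound.
Variables (R : realType) (T : Type) (dist : T -> T -> R).

Lemma diam_ge0 (E : set T) : (0 <= diam dist E)%E.
Proof. by apply: ereal_sup_ubound; left. Qed.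

Lemma diam_le (E : set T) (c : R) : 0 <= c ->
  (forall x y, E x -> E y -> dist x y <= c) -> (diam dist E <= c%:E)%E.
Proof.
move=> c0 Ec; apply: ge_ereal_sup => _ [-> | [x [y [Ex [Ey ->]]]]].
  by rewrite lee_fin.
by rewrite lee_fin; exact: Ec.
Qed.

Lemma sqr_diam_le (E : set T) (c : R) : 0 <= c ->
  (forall x y, E x -> E y -> dist x y <= c) -> (diam dist E ^+ 2 <= (c ^+ 2)%:E)%E.
Proof.
move=> c0 /(diam_le c0); have := diam_ge0 E.
by case: (diam dist E) => // d; rewrite -EFin_expe !lee_fin => d0 dc; rewrite ler_pXn2r.
Qed.

Lemma subinterval_index (a h t : R) (N : nat) : (0 < N)%N -> 0 <= h ->
  a <= t <= a + h * N%:R ->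
  exists2 i, (i < N)%N & a + h * i%:R <= t <= a + h * i.+1%:R.
Proof.
move=> N0 h0 /andP[le_at le_tN].
have [h_eq0|h_neq0] := eqVneq h 0.
  by exists 0%N => //; move: le_tN; rewrite h_eq0 !mul0r addr0 => le_tN; apply/andP.
have hp : 0 < h by rewrite lt_def h_neq0.
have s0 : 0 <= (t - a) / h by rewrite divr_ge0 // subr_ge0.
have /andP[] := truncn_itv s0; rewrite ler_pdivlMr // ltr_pdivrMr // => s1 s2.
have [lt_sN|] := ltnP (Num.truncn ((t - a) / h)) N.
  by exists (Num.truncn ((t - a) / h)) => //; apply/andP; split; lra.
rewrite -(ler_nat R) => le_Ns.
have eN : N%:R = N.-1%:R + 1 :> R by rewrite natr1 prednK.
exists N.-1; first by rewrite prednK.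
by rewrite prednK //; apply/andP; split => //; rewrite eN in le_Ns; nra.
Qed.

Lemma hausdorff_measure2_le (X A : set T) (m : nat) (L M : R)
    (P : nat -> R -> T -> Prop) :
  0 <= L -> 0 <= M -> A `<=` X ->
  (forall v, A v -> exists2 j, (j < m)%N & exists2 b : R, - L <= b <= L & P j b v) ->
  (forall j (b b' : R) v v', - L <= b <= L -> - L <= b' <= L -> P j b v -> P j b' v' ->
     dist v v' <= Num.sqrt (M * `|b - b'|)) ->
  (hausdorff_measure dist X 2 A <= (2 * m%:R * L * M)%:E)%E.
Proof.
move=> L0 M0 AX cover holder.
apply: ge_ereal_sup => _ [delta /= delta0 <-].
(* Cut [-L, L] into N pieces of length h with M h <= delta^2: the pieces of
   the m charts form a delta-cover of cost m N M h = 2 m L M. *)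
have [N N0 MLN] : exists2 N, (0 < N)%N & 2 * L * M <= N%:R * delta ^+ 2.
  have q0 : 0 <= 2 * L * M / delta ^+ 2 by rewrite divr_ge0 ?sqr_ge0 ?mulr_ge0.
  exists (Num.truncn (2 * L * M / delta ^+ 2)).+1 => //.
  have /andP[_] := truncn_itv q0.
  by rewrite ltr_pdivrMr ?exprn_gt0 // => /ltW.
set h := 2 * L / N%:R.
have h0 : 0 <= h by rewrite divr_ge0 ?mulr_ge0.
have hN : h * N%:R = 2 * L by rewrite divfK // pnatr_eq0 -lt0n.
have Mh : M * h <= delta ^+ 2.
  rewrite /h mulrA ler_pdivrMr ?ltr0n //; lra.
pose F n := [set v | A v /\ (n < m * N)%N /\
  exists2 b, - L + h * (n %% N)%N%:R <= b <= - L + h * (n %% N)%N.+1%:R &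
    P (n %/ N)%N b v].
have piece_sub i b : (i < N)%N ->
    - L + h * i%:R <= b <= - L + h * i.+1%:R -> - L <= b <= L.
  rewrite -(ler_nat R) -natr1 => iN /andP[b1 b2].
  have i0 : 0 <= i%:R :> R := ler0n R i.
  by apply/andP; split; nra.
have diamF n x y : F n x -> F n y -> dist x y <= Num.sqrt (M * h).
  have nN : (n %% N < N)%N by rewrite ltn_mod.
  move=> [_ [_ [b /[dup] /(piece_sub _ _ nN) Lb hb Px]]].
  move=> [_ [_ [b' /[dup] /(piece_sub _ _ nN) Lb' hb' Py]]].
  apply: le_trans (holder _ _ _ _ _ Lb Lb' Px Py) _.
  apply/ler_wsqrtr/ler_wpM2l => //; move: hb hb'; rewrite -natr1.
  by move=> /andP[? ?] /andP[? ?]; rewrite ler_norml; apply/andP; split; lra.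
apply: ge_ereal_inf; exists (\sum_(n <oo) diam dist (F n) ^+ 2)%E.
  exists F; split => //.
  - by move=> n v [/AX].
  - move=> v Av; have [j jm [b Lb Pb]] := cover v Av.
    have Lb' : - L <= b <= - L + h * N%:R.
      by rewrite hN; move: Lb => /andP[? ?]; apply/andP; split; lra.
    have [i iN hb] := subinterval_index N0 h0 Lb'.
    exists (j * N + i)%N => //; split => //; split; first by nia.
    by rewrite modnMDl modn_small // divnMDl // divn_small // addn0; exists b.
  - move=> n; apply: diam_le => [|x y Fx Fy]; first exact: ltW.
    apply: le_trans (diamF _ _ _ Fx Fy) _.
    by rewrite -(ger0_norm (ltW delta0)) -sqrtr_sqr ler_wsqrtr.
rewrite (nneseries_split 0 (m * N)); last by move=> k _; exact: sqre_ge0.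
rewrite eseries0 ?adde0; last first.
  move=> k km _; apply/eqP; rewrite eq_le sqre_ge0 andbT.
  have -> : 0%E = ((0 : R) ^+ 2)%:E by rewrite expr0n.
  by apply: sqr_diam_le => // x y [_ []]; lia.
apply: (@le_trans _ _ (\sum_(0 <= k < 0 + m * N) (M * h)%:E)%E).
  apply: lee_sum => k _; rewrite -(@sqr_sqrtr _ (M * h)) ?mulr_ge0 //.
  exact: sqr_diam_le (sqrtr_ge0 _) (diamF k).
rewrite sumEFin lee_fin sumr_const_nat add0n subn0 -[M * h *+ _]mulr_natr natrM.
have -> : M * h * (m%:R * N%:R) = M * (h * N%:R) * m%:R by ring.
by rewrite hN; lra.
Qed.

Lemma hausdorff_measure2_set0 (X : set T) : (hausdorff_measure dist X 2 set0 <= 0)%E.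
Proof.
by apply: le_trans (hausdorff_measure2_le (m := 0) (P := fun _ _ _ => False)
  (lexx 0) (lexx 0) (sub0set X) _ _) _; rewrite ?mulr0.
Qed.

End HausdorffBound.

Local Open Scope complex_scope.
Notation Re := complex.Re.
Notation Im := complex.Im.

Section ComplexNumbers.
Variable R : realType.
Implicit Types (x y z : R[i]) (a b : R).

Lemma Re_mul x y : Re (x * y) = Re x * Re y - Im x * Im y.
Proof. by case: x y => [? ?] [? ?]. Qed.
Lemma Im_mul x y : Im (x * y) = Re x * Im y + Im x * Re y.
Proof. by case: x y => [? ?] [? ?]. Qed.
Lemma Re_add x y : Re (x + y) = Re x + Re y.
Proof. by case: x y => [? ?] [? ?]. Qed.
Lemma Im_add x y : Im (x + y) = Im x + Im y.
Proof. by case: x y => [? ?] [? ?]. Qed.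
Lemma Re_opp x : Re (- x) = - Re x. Proof. by case: x. Qed.
Lemma Im_opp x : Im (- x) = - Im x. Proof. by case: x. Qed.
Lemma Re_sub x y : Re (x - y) = Re x - Re y.
Proof. by case: x y => [? ?] [? ?]. Qed.
Lemma Im_sub x y : Im (x - y) = Im x - Im y.
Proof. by case: x y => [? ?] [? ?]. Qed.
Lemma Re_conj x : Re x^* = Re x. Proof. by case: x. Qed.
Lemma Im_conj x : Im x^* = - Im x. Proof. by case: x. Qed.
Lemma Re_real a : Re a%:C = a. Proof. by []. Qed.
Lemma Im_real a : Im a%:C = 0. Proof. by []. Qed.
Lemma Re_rect a b : Re (a +i* b) = a. Proof. by []. Qed.
Lemma Im_rect a b : Im (a +i* b) = b. Proof. by []. Qed.
Lemma Re_1 : Re (1 : R[i]) = 1. Proof. by []. Qed.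
Lemma Im_1 : Im (1 : R[i]) = 0. Proof. by []. Qed.

Definition ReImE := (Re_mul, Im_mul, Re_add, Im_add, Re_opp, Im_opp, Re_sub,
  Im_sub, Re_conj, Im_conj, Re_real, Im_real, Re_rect, Im_rect).

Lemma complexP x y : Re x = Re y -> Im x = Im y -> x = y.
Proof. by case: x y => [? ?] [? ?] /= -> ->. Qed.

Definition abs2 z : R := Re z ^+ 2 + Im z ^+ 2.

Lemma abs2_ge0 z : 0 <= abs2 z. Proof. by rewrite addr_ge0 ?sqr_ge0. Qed.

Lemma abs2M x y : abs2 (x * y) = abs2 x * abs2 y.
Proof. by rewrite /abs2 !ReImE; ring. Qed.

Lemma abs2_conj x : abs2 x^* = abs2 x.
Proof. by rewrite /abs2 Re_conj Im_conj sqrrN. Qed.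

Lemma abs20 : abs2 0 = 0. Proof. by rewrite /abs2 expr0n addr0. Qed.

Lemma mulcJ x : x * x^* = (abs2 x)%:C.
Proof. by apply: complexP; rewrite /abs2 !ReImE; ring. Qed.

Lemma cabs_normc z : cabs z = Normc.normc z. Proof. by case: z. Qed.

Lemma cabs_ge0 z : 0 <= cabs z. Proof. exact: sqrtr_ge0. Qed.

Lemma cabs_sqr z : cabs z ^+ 2 = abs2 z.
Proof. by rewrite sqr_sqrtr // abs2_ge0. Qed.

Lemma cabs_abs2_le z a : 0 <= a -> abs2 z <= a ^+ 2 -> cabs z <= a.
Proof. by move=> a0 za; rewrite -(ger0_norm a0) -sqrtr_sqr ler_wsqrtr. Qed.

Lemma cabs_unit z : abs2 z = 1 -> cabs z = 1.
Proof. by move=> z1; rewrite /cabs -/(abs2 z) z1 sqrtr1. Qed.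

Lemma cabsM x y : cabs (x * y) = cabs x * cabs y.
Proof. by rewrite !cabs_normc Normc.normcM. Qed.

Lemma cabsV x : cabs x^-1 = (cabs x)^-1.
Proof. by rewrite !cabs_normc Normc.normcV. Qed.

Lemma ler_cabsD x y : cabs (x + y) <= cabs x + cabs y.
Proof. by rewrite !cabs_normc le_normcD. Qed.

Lemma cabsN x : cabs (- x) = cabs x.
Proof. by rewrite /cabs Re_opp Im_opp !sqrrN. Qed.

Lemma cabs_distC x y : cabs (x - y) = cabs (y - x).
Proof. by rewrite -cabsN opprB. Qed.

Lemma lerB_cabs x y : cabs x - cabs y <= cabs (x - y).
Proof. by have := ler_cabsD (x - y) y; rewrite subrK; lra. Qed.

Lemma cabsJ x : cabs x^* = cabs x.
Proof. by rewrite /cabs Re_conj Im_conj sqrrN. Qed.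

Lemma cabs_real a : cabs a%:C = `|a|.
Proof. by rewrite /cabs Re_real Im_real expr0n addr0 sqrtr_sqr. Qed.

Lemma cabs_gt0 x : x != 0 -> 0 < cabs x.
Proof.
rewrite lt_def cabs_ge0 andbT cabs_normc => x0.
by apply: contra x0 => /eqP /Normc.eq0_normc ->.
Qed.

Lemma abs2_eq0 x : abs2 x = 0 -> x = 0.
Proof.
by move=> x0; apply: Normc.eq0_normc; rewrite -cabs_normc /cabs -/(abs2 x) x0 sqrtr0.
Qed.

Lemma real_complex_eq0 a : (a%:C == 0 :> R[i]) = (a == 0).
Proof. by apply/eqP/eqP => [[]|->]. Qed.

End ComplexNumbers.

Section ProjectivePoints.
Variable R : realType.
Implicit Types (u v w x : C3 R) (l m : R[i]).

Definition scale3 l u : C3 R := (l * c0 u, l * c1 u, l * c2 u).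

Lemma scale3_1 u : scale3 1 u = u.
Proof. by case: u => [[? ?] ?]; rewrite /scale3 /c0 /c1 /c2 /= !mul1r. Qed.

Lemma herm_scale l m u v : herm (scale3 l u) (scale3 m v) = l * m^* * herm u v.
Proof. by rewrite /herm /scale3 /c0 /c1 /c2 /= !rmorphM /=; ring. Qed.

Lemma C3E u : u = (c0 u, c1 u, c2 u).
Proof. by case: u => [[? ?] ?]. Qed.

Lemma herm_eq0 u v : herm u v = 0 ->
  c0 u * (c0 v)^* = c1 u * (c1 v)^* + c2 u * (c2 v)^*.
Proof. by move=> uv; apply/eqP; rewrite -subr_eq0 -uv /herm opprD addrA. Qed.

Lemma qfE u : qf u = abs2 (c0 u) - abs2 (c1 u) - abs2 (c2 u).
Proof. by rewrite /qf /herm /abs2 !ReImE; ring. Qed.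

Lemma norm3_scale l u : norm3 (scale3 l u) = cabs l * norm3 u.
Proof.
rewrite /norm3 /cabs -sqrtrM ?addr_ge0 ?sqr_ge0 //; congr Num.sqrt.
by rewrite /dot3 /scale3 /c0 /c1 /c2 /= !ReImE; ring.
Qed.

Lemma visual_d_scale l m u v : l != 0 -> m != 0 ->
  visual_d (scale3 l u) (scale3 m v) = visual_d u v.
Proof.
move=> l0 m0; rewrite /visual_d herm_scale !cabsM cabsJ !norm3_scale.
have lm0 : cabs l * cabs m != 0 by rewrite mulf_neq0 // gt_eqF // cabs_gt0.
by rewrite mulrACA invfM mulrACA mulfV // mul1r.
Qed.

Lemma visual_d_scaler u m v : m != 0 -> visual_d u (scale3 m v) = visual_d u v.
Proof. by move=> m0; rewrite -{1}(scale3_1 u) visual_d_scale // oner_neq0. Qed.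

Lemma qf_eq0_c0 u : u <> zero3 R -> qf u = 0 ->
  c0 u != 0 /\ abs2 (c1 u) + abs2 (c2 u) = abs2 (c0 u).
Proof.
case: u => [[u0 u1] u2] u_neq0; rewrite qfE /c0 /c1 /c2 /= => qu.
split; last by lra.
apply/eqP => u00; apply: u_neq0; rewrite u00 abs20 in qu.
have := abs2_ge0 u1; have := abs2_ge0 u2 => ? ?.
have u10 : abs2 u1 = 0 by lra.
have u20 : abs2 u2 = 0 by lra.
by rewrite u00 (abs2_eq0 u10) (abs2_eq0 u20).
Qed.

Lemma S3_c0_gt0 x : S3 x -> 0 < cabs (c0 x).
Proof. by case=> /qf_eq0_c0 /[apply] -[x00 _]; rewrite cabs_gt0. Qed.

Lemma norm3_S3 x : S3 x -> norm3 x = Num.sqrt 2 * cabs (c0 x).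
Proof.
case=> /qf_eq0_c0 /[apply] -[_ x12].
rewrite /norm3 /cabs -sqrtrM ?ler0n //; congr Num.sqrt.
by rewrite /dot3 !ReImE; rewrite /abs2 in x12; lra.
Qed.

End ProjectivePoints.

Section Chains.
Variable R : realType.
Implicit Types (u v w x : C3 R) (l z : R[i]).

Lemma lagrange_identity (a1 a2 b1 b2 : R[i]) :
  abs2 (a1 * b1^* + a2 * b2^*) + abs2 (a2 * b1 - a1 * b2) =
  (abs2 a1 + abs2 a2) * (abs2 b1 + abs2 b2).
Proof. by rewrite /abs2 !ReImE; ring. Qed.

Definition chain_n w : R := abs2 (c1 w) + abs2 (c2 w).
Definition chain_k w : R := Num.sqrt (chain_n w - abs2 (c0 w)).

(* [k] is left free so that the identities below are polynomial; on the chain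
   it is [chain_k w]. *)
Definition chain_map w (k : R) z : C3 R :=
  ((chain_n w)%:C, (c0 w)^* * c1 w - k%:C * z * (c2 w)^*,
                   (c0 w)^* * c2 w + k%:C * z * (c1 w)^*).

Definition chain_pt w z := chain_map w (chain_k w) z.

Definition chain_a w x : R[i] :=
  (chain_n w)%:C * c0 x - c0 w * (c1 x * (c1 w)^* + c2 x * (c2 w)^*).

Definition chain_b w x : R[i] := c2 x * c1 w - c1 x * c2 w.

Lemma dot3_chain_map w k z :
  Re (dot3 (chain_map w k z) (chain_map w k z)) =
  chain_n w ^+ 2 + abs2 (c0 w) * chain_n w + k ^+ 2 * abs2 z * chain_n w.
Proof. by rewrite /dot3 /chain_map /chain_n /abs2 /c0 /c1 /c2 /= !ReImE; ring. Qed.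

Lemma herm_chain_map w k z z' :
  herm (chain_map w k z) (chain_map w k z') =
  (chain_n w * (chain_n w - abs2 (c0 w)))%:C - (k ^+ 2 * chain_n w)%:C * (z * z'^*).
Proof.
by apply: complexP; rewrite /herm /chain_map /chain_n /abs2 /c0 /c1 /c2 /= !ReImE; ring.
Qed.

Lemma herm_chain_map_r x w k z :
  herm x (chain_map w k z) = chain_a w x - z^* * (k%:C * chain_b w x).
Proof.
by apply: complexP;
  rewrite /herm /chain_map /chain_a /chain_b /chain_n /abs2 /c0 /c1 /c2 /= !ReImE; ring.
Qed.

Section InLC.
Variable w : C3 R.
Hypothesis w_LC : LC w.

Lemma chain_n_sub_gt0 : 0 < chain_n w - abs2 (c0 w).
Proof. by case: w_LC => _; rewrite qfE /chain_n; lra. Qed.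

Lemma chain_k_sqr : chain_k w ^+ 2 = chain_n w - abs2 (c0 w).
Proof. by rewrite sqr_sqrtr // ltW // chain_n_sub_gt0. Qed.

Lemma chain_k_gt0 : 0 < chain_k w.
Proof. by rewrite sqrtr_gt0 chain_n_sub_gt0. Qed.

Lemma chain_n_gt0 : 0 < chain_n w.
Proof. by have := chain_n_sub_gt0; have := abs2_ge0 (c0 w); lra. Qed.

Lemma norm3_chain_pt z : abs2 z = 1 -> norm3 (chain_pt w z) = Num.sqrt 2 * chain_n w.
Proof.
move=> z1; rewrite /norm3 dot3_chain_map z1 chain_k_sqr.
have -> : chain_n w ^+ 2 + abs2 (c0 w) * chain_n w +
    (chain_n w - abs2 (c0 w)) * 1 * chain_n w = 2 * chain_n w ^+ 2 by ring.
by rewrite sqrtrM ?ler0n // sqrtr_sqr ger0_norm // ltW // chain_n_gt0.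
Qed.

Lemma herm_chain_pt z z' :
  herm (chain_pt w z) (chain_pt w z') = (chain_n w * chain_k w ^+ 2)%:C * (1 - z * z'^*).
Proof. by rewrite herm_chain_map -chain_k_sqr !rmorphM; ring. Qed.

Lemma abs2_chain_b v : chain w v -> abs2 (chain_b w v) = abs2 (c0 v) * chain_k w ^+ 2.
Proof.
case=> -[/qf_eq0_c0 /[apply] -[_ v12] /herm_eq0 vw].
have := lagrange_identity (c1 v) (c2 v) (c1 w) (c2 w).
rewrite -vw abs2M abs2_conj v12 chain_k_sqr -/(chain_n w) -/(chain_b w v).
by lra.
Qed.

Lemma chain_pt_onto v : chain w v ->
  exists l z, [/\ l != 0, abs2 z = 1 & v = scale3 l (chain_pt w z)].
Proof.
move=> /[dup] /abs2_chain_b vb [[v_neq0 qv] /herm_eq0 vw].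
have [v00 _] := qf_eq0_c0 v_neq0 qv.
have n0 : (chain_n w)%:C != 0 :> R[i].
  by rewrite real_complex_eq0 gt_eqF ?chain_n_gt0.
have k0 : (chain_k w)%:C != 0 :> R[i].
  by rewrite real_complex_eq0 gt_eqF ?chain_k_gt0.
have k_ge0 : 0 <= chain_k w by rewrite ltW ?chain_k_gt0.
exists (c0 v / (chain_n w)%:C), (chain_b w v / (c0 v * (chain_k w)%:C)); split.
- by rewrite mulf_neq0 // invr_neq0.
- have bE : cabs (chain_b w v) = cabs (c0 v) * chain_k w.
    by rewrite /cabs -/(abs2 _) vb sqrtrM ?abs2_ge0 // sqrtr_sqr ger0_norm.
  rewrite -cabs_sqr cabsM cabsV cabsM cabs_real ger0_norm // bE mulfV ?expr1n //.
  by rewrite mulf_neq0 // gt_eqF ?cabs_gt0 ?chain_k_gt0.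
- have nE : (chain_n w)%:C = c1 w * (c1 w)^* + c2 w * (c2 w)^* :> R[i].
    by rewrite !mulcJ rmorphD.
  have e1 : c1 v = c0 v / (chain_n w)%:C * ((c0 w)^* * c1 w -
      (chain_k w)%:C * (chain_b w v / (c0 v * (chain_k w)%:C)) * (c2 w)^*).
    apply: (mulIf n0); transitivity (c0 v * (c0 w)^* * c1 w - chain_b w v * (c2 w)^*).
      by rewrite vw nE /chain_b; ring.
    by field; rewrite v00 k0.
  have e2 : c2 v = c0 v / (chain_n w)%:C * ((c0 w)^* * c2 w +
      (chain_k w)%:C * (chain_b w v / (c0 v * (chain_k w)%:C)) * (c1 w)^*).
    apply: (mulIf n0); transitivity (c0 v * (c0 w)^* * c2 w + chain_b w v * (c1 w)^*).
      by rewrite vw nE /chain_b; ring.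
    by field; rewrite v00 k0.
  rewrite [v in LHS]C3E; congr (_, _, _); [exact: esym (divfK n0 _)|exact: e1|exact: e2].
Qed.

End InLC.
End Chains.

Section ChainGeometry.
Variable R : realType.
Implicit Types (w x : C3 R) (l m z : R[i]).

Lemma sqrt2_sqr : Num.sqrt 2 ^+ 2 = 2 :> R.
Proof. by rewrite sqr_sqrtr ?ler0n. Qed.

Lemma visual_d_chain_pt w l m z z' : LC w -> l != 0 -> m != 0 ->
  abs2 z = 1 -> abs2 z' = 1 ->
  visual_d (scale3 l (chain_pt w z)) (scale3 m (chain_pt w z')) =
  Num.sqrt (chain_k w ^+ 2 * cabs (z - z') / (2 * chain_n w)).
Proof.
move=> w_LC l0 m0 z1 z'1; rewrite visual_d_scale // /visual_d.
rewrite herm_chain_pt // !norm3_chain_pt // cabsM cabs_real.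
have -> : 1 - z * z'^* = (z' - z) * z'^* by rewrite mulrBl mulcJ z'1.
rewrite cabsM cabsJ (cabs_unit z'1) mulr1 cabs_distC.
have n0 := chain_n_gt0 w_LC.
have nk0 : 0 <= chain_n w * chain_k w ^+ 2 by rewrite mulr_ge0 ?sqr_ge0 // ltW.
rewrite ger0_norm //; congr Num.sqrt; rewrite mulrACA -expr2 sqrt2_sqr.
by field; rewrite gt_eqF.
Qed.

Lemma visual_ball_chain_pt w x l z r : LC w -> S3 x -> l != 0 -> abs2 z = 1 ->
  visual_d x (scale3 l (chain_pt w z)) < r ->
  cabs (chain_a w x - z^* * ((chain_k w)%:C * chain_b w x)) <
    2 * r ^+ 2 * cabs (c0 x) * chain_n w.
Proof.
move=> w_LC x_S3 l0 z1; rewrite visual_d_scaler // /visual_d.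
rewrite norm3_S3 // norm3_chain_pt // /chain_pt herm_chain_map_r.
set a := cabs _; set D := (X in a / X).
have D_pos : 0 < D.
  by rewrite /D !mulr_gt0 ?S3_c0_gt0 ?chain_n_gt0 ?sqrtr_gt0 ?ltr0n.
have DE : D = 2 * cabs (c0 x) * chain_n w.
  by rewrite /D mulrACA -expr2 sqrt2_sqr mulrA.
move=> ltr; have r0 : 0 < r by apply: le_lt_trans ltr; exact: sqrtr_ge0.
move: ltr; rewrite -[r in _ < r](ger0_norm (ltW r0)) -sqrtr_sqr.
by rewrite ltr_sqrt ?exprn_gt0 // ltr_pdivrMr // DE; lra.
Qed.

End ChainGeometry.

Section UnitCircleCharts.
Variable R : realType.
Implicit Types (z : R[i]) (b : R).

Definition arc_pt b : R[i] := Num.sqrt (1 - b ^+ 2) +i* b.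

Definition quarter (j : nat) : R[i] := 'i ^+ j.

Lemma abs2_arc_pt b : b ^+ 2 <= 1 -> abs2 (arc_pt b) = 1.
Proof. by move=> b1; rewrite /abs2 /= sqr_sqrtr; [ring | lra]. Qed.

Lemma abs2_quarter j : abs2 (quarter j) = 1.
Proof.
rewrite /quarter; elim: j => [|j IHj]; first by rewrite /abs2 /=; ring.
by rewrite exprS abs2M IHj mulr1 /abs2 /=; ring.
Qed.

Lemma arc_ptE a b : 0 <= a -> a ^+ 2 + b ^+ 2 = 1 -> arc_pt b = a +i* b.
Proof.
move=> a0 ab; rewrite /arc_pt (_ : 1 - b ^+ 2 = a ^+ 2) ?sqrtr_sqr ?ger0_norm //.
by lra.
Qed.

Lemma sqr_le_of_norm_le (b c : R) : `|b| <= c -> b ^+ 2 <= c ^+ 2.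
Proof.
move=> bc; have c0 := le_trans (normr_ge0 b) bc.
by rewrite -real_normK ?num_real // ler_pXn2r ?nnegrE.
Qed.

Lemma arc_pt_lipschitz b b' : `|b| <= 4/5 -> `|b'| <= 4/5 ->
  cabs (arc_pt b - arc_pt b') <= 3 * `|b - b'|.
Proof.
move=> /sqr_le_of_norm_le b2 /sqr_le_of_norm_le b'2.
have {}b2 : b ^+ 2 <= 16/25 by lra.
have {}b'2 : b' ^+ 2 <= 16/25 by lra.
apply: cabs_abs2_le; first by rewrite mulr_ge0.
rewrite /abs2 Re_sub Im_sub /= exprMn real_normK ?num_real //.
set a := Num.sqrt (1 - b ^+ 2); set a' := Num.sqrt (1 - b' ^+ 2).
have a2 : a ^+ 2 = 1 - b ^+ 2 by rewrite sqr_sqrtr //; lra.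
have a'2 : a' ^+ 2 = 1 - b' ^+ 2 by rewrite sqr_sqrtr //; lra.
have a0 : 0 <= a := sqrtr_ge0 _.
have a'0 : 0 <= a' := sqrtr_ge0 _.
(* away from b = +-1 the square root has bounded slope *)
have a35 : 3/5 <= a by nra.
have a'35 : 3/5 <= a' by nra.
have conj_diff : (a - a') * (a + a') = (b' - b) * (b + b') by nra.
have bb' : (b + b') ^+ 2 <= 64/25 by have := sqr_ge0 (b - b'); nra.
have aa' : 36/25 <= (a + a') ^+ 2 by nra.
have : (a - a') ^+ 2 * (36/25) <= (b - b') ^+ 2 * (64/25).
  apply: le_trans (_ : _ <= (a - a') ^+ 2 * (a + a') ^+ 2) _.
    by rewrite ler_wpM2l ?sqr_ge0.
  have -> : (a - a') ^+ 2 * (a + a') ^+ 2 = (b - b') ^+ 2 * (b + b') ^+ 2.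
    by rewrite -!exprMn conj_diff; ring.
  by rewrite ler_wpM2l ?sqr_ge0.
by have := sqr_ge0 (b - b'); lra.
Qed.

Lemma unit_circle_cover z : abs2 z = 1 ->
  exists2 j, (j < 4)%N & exists2 b, - (4/5) <= b <= 4/5 & z = quarter j * arc_pt b.
Proof.
case: z => x y; rewrite /abs2 /= => xy1.
have small (c : R) : c ^+ 2 <= 16/25 -> - (4/5) <= c <= 4/5.
  by move=> c2; apply/andP; split; nra.
have [x_ge|x_lt] := lerP (3/5) x.
  exists 0%N => //; exists y; first by apply: small; nra.
  by rewrite (@arc_ptE x) ?expr0 ?mul1r //; lra.
have [x_le|x_gt] := lerP x (- (3/5)).
  exists 2%N => //; exists (- y); first by apply: small; nra.
  by rewrite /quarter sqr_i (@arc_ptE (- x)) ?mulN1r; [simpc | lra | lra].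
have [y_ge|y_lt] := lerP (3/5) y.
  exists 1%N => //; exists (- x); first by apply: small; nra.
  by rewrite /quarter expr1 (@arc_ptE y); [simpc | lra | lra].
have [y_le|y_gt] := lerP y (- (3/5)).
  exists 3%N => //; exists x; first by apply: small; nra.
  by rewrite /quarter exprS sqr_i mulrN1 mulNr (@arc_ptE (- y)); [simpc | lra | lra].
by nra.
Qed.

Lemma unit_circle_local z1 z (D : R) : abs2 z1 = 1 -> abs2 z = 1 ->
  cabs (z - z1) <= D -> D <= 4/5 -> exists2 b, - D <= b <= D & z = z1 * arc_pt b.
Proof.
move=> z1_1 z_1 zD D45.
have z1J : z1 * z1^* = 1 by rewrite mulcJ z1_1.
have D0 : 0 <= D := le_trans (cabs_ge0 _) zD.
set t := z * z1^*.
have zE : z = z1 * t by rewrite /t mulrCA z1J mulr1.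
have t1 : abs2 t = 1 by rewrite /t abs2M abs2_conj z1_1 z_1 mulr1.
have tD : abs2 (t - 1) <= D ^+ 2.
  have -> : t - 1 = (z - z1) * z1^* by rewrite /t mulrBl z1J.
  by rewrite -cabs_sqr cabsM cabsJ (cabs_unit z1_1) mulr1 ler_pXn2r ?nnegrE ?cabs_ge0.
clearbody t; case: t zE t1 tD => x y zE.
rewrite /abs2 Re_sub Im_sub Re_1 Im_1 /= subr0 => t1 tD.
have y2 : y ^+ 2 <= D ^+ 2 by have := sqr_ge0 (x - 1); lra.
exists y; first by apply/andP; split; nra.
by rewrite zE (@arc_ptE x) //; nra.
Qed.

End UnitCircleCharts.

Lemma cabs_sub_mulJ_lt (R : realType) (a k z z' : R[i]) (e : R) :
  cabs (a - z^* * k) < e -> cabs (a - z'^* * k) < e -> cabs (z - z') * cabs k < 2 * e.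
Proof.
move=> ze z'e.
have -> : cabs (z - z') * cabs k = cabs ((a - z^* * k) - (a - z'^* * k)).
  by rewrite -cabsJ -cabsM rmorphB /= -cabs_distC; congr cabs; ring.
by apply: le_lt_trans (ler_cabsD _ _) _; rewrite cabsN; lra.
Qed.

Section ChainMeasure.
Variable R : realType.
Implicit Types (w x v : C3 R) (A : set (C3 R)).

Lemma chain_a_lower w x : LC w -> S3 x ->
  cabs (c0 x) * chain_k w ^+ 2 / 2 <= cabs (chain_a w x).
Proof.
move=> w_LC [/qf_eq0_c0 /[apply] -[_ x12]].
have n0 := chain_n_gt0 w_LC.
set a' := c1 x * (c1 w)^* + c2 x * (c2 w)^*.
set s := Num.sqrt (chain_n w).
have s2 : s ^+ 2 = chain_n w by rewrite sqr_sqrtr // ltW.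
have a'_le : cabs a' <= cabs (c0 x) * s.
  apply: cabs_abs2_le; first by rewrite mulr_ge0 ?cabs_ge0 ?sqrtr_ge0.
  have := lagrange_identity (c1 x) (c2 x) (c1 w) (c2 w).
  rewrite x12 -/a' -/(chain_n w) exprMn s2 cabs_sqr.
  by have := abs2_ge0 (c2 x * c1 w - c1 x * c2 w); lra.
have w0_sqr : cabs (c0 w) ^+ 2 = chain_n w - chain_k w ^+ 2.
  by rewrite cabs_sqr chain_k_sqr //; ring.
have gap : chain_k w ^+ 2 / 2 <= chain_n w - cabs (c0 w) * s.
  by have := sqr_ge0 (s - cabs (c0 w)); lra.
have a_ge : cabs ((chain_n w)%:C * c0 x) - cabs (c0 w * a') <= cabs (chain_a w x).
  exact: lerB_cabs.
rewrite !cabsM cabs_real (ger0_norm (ltW n0)) in a_ge.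
have := ler_wpM2l (cabs_ge0 (c0 w)) a'_le.
have := ler_wpM2l (cabs_ge0 (c0 x)) gap.
by lra.
Qed.

Lemma chain_b_large w x z r : LC w -> S3 x -> abs2 z = 1 ->
  64 * r ^+ 2 * chain_n w < chain_k w ^+ 2 ->
  cabs (chain_a w x - z^* * ((chain_k w)%:C * chain_b w x)) <
    2 * r ^+ 2 * cabs (c0 x) * chain_n w ->
  chain_k w * cabs (c0 x) / 12 <= cabs (chain_b w x).
Proof.
move=> w_LC x_S3 z1 big near.
have k0 := chain_k_gt0 w_LC.
have x0 := S3_c0_gt0 x_S3.
have a_le : cabs (chain_a w x) <=
    2 * r ^+ 2 * cabs (c0 x) * chain_n w + chain_k w * cabs (chain_b w x).
  have := ler_cabsD (chain_a w x - z^* * ((chain_k w)%:C * chain_b w x))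
                    (z^* * ((chain_k w)%:C * chain_b w x)).
  rewrite subrK !cabsM cabsJ (cabs_unit z1) cabs_real (ger0_norm (ltW k0)) mul1r.
  by lra.
have a_ge := chain_a_lower w_LC x_S3.
have big_x : cabs (c0 x) * (64 * r ^+ 2 * chain_n w) < cabs (c0 x) * chain_k w ^+ 2.
  by rewrite ltr_pM2l.
have := mulr_gt0 x0 (exprn_gt0 2 k0).
by rewrite -(ler_pM2l k0); lra.
Qed.

Lemma eta_charts_le w A (m : nat) (c : nat -> R[i]) (L : R) :
  LC w -> A `<=` chain w -> (forall j, abs2 (c j) = 1) -> 0 <= L -> L <= 4/5 ->
  (forall v, A v -> exists2 j, (j < m)%N & exists2 b : R, - L <= b <= L &
      exists2 l, l != 0 & v = scale3 l (chain_pt w (c j * arc_pt b))) ->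
  (hausdorff_measure (@visual_d R) (chain w) 2 A <=
     (3 * m%:R * L * (chain_k w ^+ 2 / chain_n w))%:E)%E.
Proof.
move=> w_LC Aw c1 L0 L45 cover.
have n0 := chain_n_gt0 w_LC.
have q0 : 0 <= chain_k w ^+ 2 / (2 * chain_n w).
  by rewrite divr_ge0 ?sqr_ge0 // mulr_ge0 // ltW.
have M0 : 0 <= chain_k w ^+ 2 / (2 * chain_n w) * 3 by rewrite mulr_ge0.
apply: le_trans (hausdorff_measure2_le L0 M0 Aw cover _) _.
  move=> j b b' v v' Lb Lb' [l l0 ->] [l' l'0 ->].
  have small (t : R) : - L <= t <= L -> `|t| <= 4/5 /\ t ^+ 2 <= 1.
    move=> /andP[? ?]; have tL : `|t| <= 4/5 by rewrite ler_norml; apply/andP; split; lra.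
    by split => //; have := sqr_le_of_norm_le tL; lra.
  have [b45 b1] := small _ Lb; have [b'45 b'1] := small _ Lb'.
  rewrite visual_d_chain_pt // ?abs2M ?c1 ?abs2_arc_pt ?mul1r //.
  apply: ler_wsqrtr; rewrite -mulrBr cabsM cabs_unit // mul1r mulrAC.
  by apply: le_trans (ler_wpM2l q0 (arc_pt_lipschitz b45 b'45)) _; rewrite mulrA.
have -> : 2 * m%:R * L * (chain_k w ^+ 2 / (2 * chain_n w) * 3) =
    3 * m%:R * L * (chain_k w ^+ 2 / chain_n w).
  by field; rewrite gt_eqF.
by [].
Qed.

Lemma eta_chain_le w A : LC w -> A `<=` chain w ->
  (hausdorff_measure (@visual_d R) (chain w) 2 A <=
     (48/5 * (chain_k w ^+ 2 / chain_n w))%:E)%E.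
Proof.
move=> w_LC Aw.
have cover v : A v -> exists2 j, (j < 4)%N & exists2 b : R, - (4/5) <= b <= 4/5 &
    exists2 l, l != 0 & v = scale3 l (chain_pt w (quarter R j * arc_pt b)).
  move=> /Aw /(chain_pt_onto w_LC) [l [z [l0 z1 ->]]].
  have [j j4 [b Lb ->]] := unit_circle_cover z1.
  by exists j => //; exists b => //; exists l.
have L0 : 0 <= 4/5 :> R by lra.
apply: le_trans (eta_charts_le w_LC Aw (@abs2_quarter R) L0 (lexx _) cover) _.
by rewrite lee_fin; lra.
Qed.

Section BallNearChainPoint.
Variables (w x : C3 R) (r : R) (z1 : R[i]).
Hypotheses (w_LC : LC w) (x_S3 : S3 x) (z1_1 : abs2 z1 = 1).
Hypothesis big : 64 * r ^+ 2 * chain_n w < chain_k w ^+ 2.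
Hypothesis near1 : cabs (chain_a w x - z1^* * ((chain_k w)%:C * chain_b w x)) <
  2 * r ^+ 2 * cabs (c0 x) * chain_n w.

Let n0 := chain_n_gt0 w_LC.
Let k0 := chain_k_gt0 w_LC.
Let x0 := S3_c0_gt0 x_S3.
Let b_large := chain_b_large w_LC x_S3 z1_1 big near1.

Let kb0 : 0 < chain_k w * cabs (chain_b w x).
Proof.
by rewrite mulr_gt0 //; apply: lt_le_trans b_large; rewrite !divr_gt0 ?mulr_gt0.
Qed.

Let arc_len := 4 * r ^+ 2 * cabs (c0 x) * chain_n w / (chain_k w * cabs (chain_b w x)).

Let arc_len_ge0 : 0 <= arc_len.
Proof.
apply: divr_ge0 (ltW kb0); apply: mulr_ge0 (ltW n0); apply: mulr_ge0 (ltW x0).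
exact: mulr_ge0 (ler0n _ 4) (sqr_ge0 r).
Qed.

Let arc_len_le : arc_len <= 4/5.
Proof.
rewrite /arc_len ler_pdivrMr //.
have : cabs (c0 x) * (64 * r ^+ 2 * chain_n w) < cabs (c0 x) * chain_k w ^+ 2.
  by rewrite ltr_pM2l.
have : chain_k w * (chain_k w * cabs (c0 x) / 12) <= chain_k w * cabs (chain_b w x).
  by rewrite ler_pM2l.
by have := kb0; lra.
Qed.

Let ball_param_close z :
  cabs (chain_a w x - z^* * ((chain_k w)%:C * chain_b w x)) <
    2 * r ^+ 2 * cabs (c0 x) * chain_n w ->
  cabs (z - z1) <= arc_len.
Proof.
move=> /cabs_sub_mulJ_lt /(_ near1).
rewrite /arc_len ler_pdivlMr // cabsM cabs_real (ger0_norm (ltW k0)).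
by lra.
Qed.

Lemma eta_ball_near_le A : A `<=` visual_ball x r `&` chain w ->
  (hausdorff_measure (@visual_d R) (chain w) 2 A <= (144 * r ^+ 2)%:E)%E.
Proof.
move=> A_ball.
have Aw : A `<=` chain w by move=> v /A_ball [].
have cover v : A v -> exists2 j, (j < 1)%N & exists2 b : R, - arc_len <= b <= arc_len &
    exists2 l, l != 0 & v = scale3 l (chain_pt w (z1 * arc_pt b)).
  move=> /A_ball [[_ vx] /(chain_pt_onto w_LC) [l [z [l0 z_1 vE]]]].
  rewrite vE in vx.
  have zD := ball_param_close (visual_ball_chain_pt w_LC x_S3 l0 z_1 vx).
  have [b Db zE] := unit_circle_local z1_1 z_1 zD arc_len_le.
  by exists 0%N => //; exists b => //; exists l => //; rewrite vE zE.
apply: le_trans (eta_charts_le w_LC Aw (fun=> z1_1) arc_len_ge0 arc_len_le cover) _.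
have b0 : 0 < cabs (chain_b w x) by rewrite -(pmulr_rgt0 _ k0).
have -> : 3 * 1%:R * arc_len * (chain_k w ^+ 2 / chain_n w) =
    12 * r ^+ 2 * (cabs (c0 x) * chain_k w / cabs (chain_b w x)).
  by rewrite /arc_len; field; rewrite !gt_eqF.
have ratio : cabs (c0 x) * chain_k w / cabs (chain_b w x) <= 12.
  by rewrite ler_pdivrMr //; have := b_large; lra.
by rewrite lee_fin; have := ler_wpM2l (sqr_ge0 r) ratio; lra.
Qed.

End BallNearChainPoint.

Lemma eta_ball_le w x r : LC w -> S3 x ->
  64 * r ^+ 2 * chain_n w < chain_k w ^+ 2 ->
  (hausdorff_measure (@visual_d R) (chain w) 2 (visual_ball x r `&` chain w) <=
     (144 * r ^+ 2)%:E)%E.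
Proof.
move=> w_LC x_S3 big.
have [[v1 [[_ v1x] v1w]] | empty] := pselect (exists v, (visual_ball x r `&` chain w) v).
  have [l1 [z1 [l10 z1_1 v1E]]] := chain_pt_onto w_LC v1w.
  rewrite v1E in v1x.
  apply: (eta_ball_near_le w_LC x_S3 z1_1 big) => //.
  exact: visual_ball_chain_pt w_LC x_S3 l10 z1_1 v1x.
have -> : visual_ball x r `&` chain w = set0.
  by apply/seteqP; split => // v Av; case: empty; exists v.
apply: le_trans (hausdorff_measure2_set0 _ _) _.
by rewrite lee_fin mulr_ge0 ?sqr_ge0.
Qed.

End ChainMeasure.

Unset Implicit Arguments.

Theorem lemma5p8 (R : realType) (K : set (C3 R)) :
  K `<=` @LC R -> dE_compact K ->
  exists C : R, forall (w x : C3 R) (r : R),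
    K w -> @S3 R x -> 0 < r ->
    (eta_chain w (visual_ball x r) <= (C * r ^+ 2)%:E)%E.
Proof.
(* 640 >= max (64 * 48/5) 144 *)
move=> KL _; exists 640 => w x r /KL w_LC x_S3 _; rewrite /eta_chain.
have r2 := sqr_ge0 r.
have [small|big] := lerP (chain_k w ^+ 2) (64 * r ^+ 2 * chain_n w).
  apply: le_trans (eta_chain_le w_LC (A := visual_ball x r `&` chain w) _) _.
    by move=> v [].
  have : chain_k w ^+ 2 / chain_n w <= 64 * r ^+ 2.
    by rewrite ler_pdivrMr ?chain_n_gt0.
  by rewrite lee_fin; lra.
apply: le_trans (eta_ball_le w_LC x_S3 big) _.
by rewrite lee_fin; lra.
Qed.
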